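(* Let $k$ be a commutative ring and $H$ a Hopf algebra over $k$, finitely generated projective as a $k$-module, with counit $\epsilon$. Let $P$ be an invertible $k$-module, $Q=P^*$, and let $\psi:H\to P$ be a Frobenius homomorphism satisfying $\sum a_{(1)}\otimes\psi(a_{(2)})=1_H\otimes\psi(a)$ for all $a\in H$, with left norm $N=\sum_iN_i\otimes q_i\in H\otimes Q$. Then $H$ is a separable $k$-algebra if and only if the element $\sum_i\epsilon(N_i)q_i\in Q$ is Morita-invertible.
   Context: $\psi$ is a Frobenius homomorphism means that $x\mapsto(y\mapsto\psi(yx))$ is a bijection $H\to\mathrm{Hom}_k(H,P)$. The left norm of $\psi$ is the unique $N=\sum_iN_i\otimes q_i\in H\otimes Q$ with $\sum_i q_i(\psi(aN_i))=\epsilon(a)$ for all $a\in H$. An element $q\in Q$ is Morita-invertible if there is $p\in P$ with $q(p)=1_k$. *)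

From HB Require Import structures.
From mathcomp Require Import all_boot all_order all_algebra.
Set Implicit Arguments. Unset Strict Implicit. Unset Printing Implicit Defensive.
Import GRing.Theory.
Local Open Scope ring_scope.

Section HopfDefs.
Variable k : comPzRingType.

Definition klinear (M W : lmodType k) (f : M -> W) : Prop :=
  forall (a : k) (x y : M), f (a *: x + y) = a *: f x + f y.

Definition kbilinear (M N W : lmodType k) (f : M -> N -> W) : Prop :=
  (forall n : N, klinear (fun m => f m n)) /\ (forall m : M, klinear (f m)).

Definition ktrilinear (M N L W : lmodType k) (f : M -> N -> L -> W) : Prop :=
  [/\ forall (n : N) (l : L), klinear (fun m => f m n l),
      forall (m : M) (l : L), klinear (fun n => f m n l)
    & forall (m : M) (n : N), klinear (f m n)].

(* Elements of M (x)_k N are represented by finite lists of pairs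
   [:: (m_1, n_1); ...] standing for sum_i m_i (x) n_i.  Two such lists
   represent the same tensor iff every bilinear map takes the same value
   on them (universal property of the tensor product). *)
Definition teq (M N : lmodType k) (s t : seq (M * N)) : Prop :=
  forall (W : lmodType k) (f : M -> N -> W), kbilinear f ->
    \sum_(x <- s) f x.1 x.2 = \sum_(x <- t) f x.1 x.2.

Definition teq3 (M N L : lmodType k) (s t : seq (M * N * L)) : Prop :=
  forall (W : lmodType k) (f : M -> N -> L -> W), ktrilinear f ->
    \sum_(x <- s) f x.1.1 x.1.2 x.2 = \sum_(x <- t) f x.1.1 x.1.2 x.2.

Definition is_tensor_product (M N T : lmodType k) (beta : M -> N -> T) : Prop :=
  kbilinear beta /\
  forall (W : lmodType k) (f : M -> N -> W), kbilinear f ->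
    (exists g : T -> W, klinear g /\ forall m n, f m n = g (beta m n)) /\
    (forall g g' : T -> W, klinear g -> klinear g' ->
       (forall m n, g (beta m n) = g' (beta m n)) -> forall t, g t = g' t).

Definition fg_projective (M : lmodType k) : Prop :=
  exists (n : nat) (f : M -> 'rV[k]_n) (g : 'rV[k]_n -> M),
    [/\ klinear f, klinear g & cancel f g].

(* invertible k-module: there is Q' with P (x)_k Q' isomorphic to k *)
Definition invertible_module (P : lmodType k) : Prop :=
  exists (Q' : lmodType k) (beta : P -> Q' -> k^o), is_tensor_product beta.

(* (Q, ev) is the dual module P^* = Hom_k(P, k), with ev q p = q(p) *)
Definition is_dual (P Q : lmodType k) (ev : Q -> P -> k^o) : Prop :=
  kbilinear ev /\
  forall phi : P -> k^o, klinear phi ->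
    exists q : Q, (forall p, ev q p = phi p) /\
      forall q' : Q, (forall p, ev q' p = phi p) -> q' = q.

(* Hopf algebra structure on the k-algebra H, with comultiplication
   Delta (a representative of Delta(a) in H (x) H), counit eps, antipode S. *)
Definition is_hopf_algebra (H : algType k) (Delta : H -> seq (H * H))
    (eps : H -> k^o) (S : H -> H) : Prop :=
  [/\
      forall (a : k) (x y : H),
        teq (Delta (a *: x + y))
            ([seq (a *: u.1, u.2) | u <- Delta x] ++ Delta y),
      forall x y : H,
        teq (Delta (x * y))
            [seq (u.1 * v.1, u.2 * v.2) | u <- Delta x, v <- Delta y],
      teq (Delta 1) [:: (1, 1)],
      forall x : H,
        teq3 (flatten [seq [seq (v.1, v.2, u.2) | v <- Delta u.1] | u <- Delta x])
             (flatten [seq [seq (u.1, v.1, v.2) | v <- Delta u.2] | u <- Delta x])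
    & [/\
          [/\ klinear eps,
          (forall x y : H, eps (x * y) = eps x * eps y) &
          eps 1 = 1],
          (forall x : H, \sum_(u <- Delta x) eps u.1 *: u.2 = x),
          (forall x : H, \sum_(u <- Delta x) eps u.2 *: u.1 = x)
        & [/\
              klinear S,
              (forall x : H, \sum_(u <- Delta x) S u.1 * u.2 = eps x *: 1)
            & (forall x : H, \sum_(u <- Delta x) u.1 * S u.2 = eps x *: 1)]]].

Definition frobenius_hom (H : algType k) (P : lmodType k) (psi : H -> P) : Prop :=
  klinear psi /\
  forall phi : H -> P, klinear phi ->
    exists x : H, (forall y, phi y = psi (y * x)) /\
      forall x' : H, (forall y, phi y = psi (y * x')) -> x' = x.

Definition left_norm (H : algType k) (P Q : lmodType k) (ev : Q -> P -> k^o)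
    (psi : H -> P) (eps : H -> k^o) (N : seq (H * Q)) : Prop :=
  forall a : H, \sum_(u <- N) ev u.2 (psi (a * u.1)) = eps a.

Definition morita_invertible (P Q : lmodType k) (ev : Q -> P -> k^o) (q : Q) : Prop :=
  exists p : P, ev q p = 1.

Definition separable_algebra (H : algType k) : Prop :=
  exists e : seq (H * H),
    \sum_(u <- e) u.1 * u.2 = 1 /\
    forall a : H, teq [seq (a * u.1, u.2) | u <- e] [seq (u.1, u.2 * a) | u <- e].

End HopfDefs.

(* If e is a separability idempotent, t = (eps (x) id)(e) is a right integral
   with eps t = 1, and the defining property of the norm evaluated at t gives
   q(psi t) = eps t = 1 for q = sum_i eps(N_i) q_i.
   Conversely, if q(p) = 1 then P = k p since P is invertible, so lam = q o psi
   is a Frobenius form on H, with dual bases (x_j), (y_j), and the hypothesis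
   on psi says that lam is a left integral in H^*. The element
   s = sum_j eps(x_j) y_j satisfies lam(s a) = eps(a) and, by the norm,
   eps s = 1; the identity sum S(s_(1)) lam(s_(2) b) = b then turns
   sum S(s_(1)) s_(2) = 1 into sum_j x_j y_j = 1. As the Casimir element
   sum_j x_j (x) y_j of a Frobenius form commutes with H, it is a separability
   idempotent. *)

From HB Require Import structures.
From mathcomp Require Import all_boot all_order all_algebra ring.
Set Implicit Arguments. Unset Strict Implicit.

Import GRing.Theory.
Local Open Scope ring_scope.

Section KLinear.
Variable k : comPzRingType.

Section Maps.
Variables (M W : lmodType k) (f : M -> W).
Hypothesis lin_f : klinear f.

Lemma klinear0 : f 0 = 0.
Proof. by have := lin_f (-1) 0 0; rewrite scaler0 addr0 scaleN1r addNr. Qed.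

Lemma klinearD x y : f (x + y) = f x + f y.
Proof. by have := lin_f 1 x y; rewrite !scale1r. Qed.

Lemma klinearZ a x : f (a *: x) = a *: f x.
Proof. by have := lin_f a x 0; rewrite addr0 klinear0 addr0. Qed.

Lemma klinear_sum (I : Type) (r : seq I) (P : pred I) (F : I -> M) :
  f (\sum_(i <- r | P i) F i) = \sum_(i <- r | P i) f (F i).
Proof. exact: (big_morph f klinearD klinear0). Qed.

End Maps.

Lemma klinear_scalar (W : lmodType k) (f : k^o -> W) :
  klinear f -> forall c : k^o, f c = c *: f 1.
Proof. by move=> lin_f c; rewrite -klinearZ // /GRing.scale /= mulr1. Qed.

(* For m, the linear map induced by (x, y) |-> beta m y *: x sends beta z y = 0
   to beta m y *: z, so c |-> c *: z vanishes on the image of beta. *)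
Lemma tensor_product_nondegenerate (P Q' : lmodType k) (beta : P -> Q' -> k^o) :
  is_tensor_product beta -> forall z, (forall y, beta z y = 0) -> z = 0.
Proof.
move=> [[_ lin_beta] univ] z beta_z0.
have factor m : exists g : k^o -> P,
    klinear g /\ forall x y, beta m y *: x = g (beta x y).
  have bil : kbilinear (fun (x : P) (y : Q') => beta m y *: x).
    split=> [y a x1 x2 | x a y1 y2]; first by rewrite scalerDr !scalerA mulrC.
    by rewrite lin_beta scalerDl -scalerA.
  by have [[g ?] _] := univ P _ bil; exists g.
have bil0 : kbilinear (fun (_ : P) (_ : Q') => (0 : P)).
  by split=> ? ? ? ?; rewrite scaler0 addr0.
have [_ unique0] := univ P _ bil0.
have linZ : klinear (fun c : k^o => c *: z) by move=> a c1 c2; rewrite scalerDl scalerA.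
have lin0 : klinear (fun c : k^o => (0 : P)) by move=> a c1 c2; rewrite scaler0 addr0.
rewrite -[z]scale1r; apply: (unique0 _ _ linZ lin0) => m n.
by have [g [lin_g ->]] := factor m; rewrite beta_z0 klinear0.
Qed.

(* The bilinear map (x, y) |-> ev0 x * beta p y is c * beta x y for the scalar
   c = h 1 it induces; nondegeneracy then gives ev0 x *: p = c *: x. *)
Lemma invertible_module_unimodular (P : lmodType k) (ev0 : P -> k^o) (p : P) :
  invertible_module P -> klinear ev0 -> ev0 p = 1 -> forall x, x = ev0 x *: p.
Proof.
move=> [Q' [beta tensor_beta]] lin_ev0 ev0p.
have [[lin_beta1 lin_beta2] univ] := tensor_beta.
have bil : kbilinear (fun (x : P) (y : Q') => (ev0 x * beta p y : k^o)).
  split=> [y a x1 x2 | x a y1 y2]; rewrite ?lin_ev0 ?lin_beta2 /GRing.scale /=; ring.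
have [[h [lin_h h_beta]] _] := univ _ _ bil.
set c := h 1.
have ev0_c x : ev0 x *: p = c *: x.
  apply/eqP; rewrite -subr_eq0; apply/eqP.
  apply: (tensor_product_nondegenerate tensor_beta) => y.
  rewrite (klinearD (lin_beta1 y)) -scaleNr !(klinearZ (lin_beta1 y)).
  change (ev0 x * beta p y + (- c) * beta x y = 0).
  by rewrite h_beta (klinear_scalar lin_h) -/c /GRing.scale /= mulNr mulrC subrr.
have c1 : c = 1.
  have := ev0_c p; rewrite ev0p scale1r => /(congr1 ev0).
  by rewrite klinearZ // ev0p /GRing.scale /= mulr1.
by move=> x; rewrite ev0_c c1 scale1r.
Qed.

Lemma frobenius_hom_comp (H : algType k) (P W : lmodType k) (psi : H -> P)
    (g : P -> W) (g' : W -> P) :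
  frobenius_hom psi -> klinear g -> klinear g' -> cancel g g' -> cancel g' g ->
  frobenius_hom (g \o psi).
Proof.
move=> [lin_psi frob] lin_g lin_g' gK g'K; split.
  by move=> a x y; rewrite /= lin_psi lin_g.
move=> phi lin_phi.
have lin_phi' : klinear (g' \o phi) by move=> a x y; rewrite /= lin_phi lin_g'.
have [x [phi_x uniq_x]] := frob _ lin_phi'.
exists x; split=> [y | x' phi_x']; first by rewrite /= -phi_x g'K.
by apply: uniq_x => y; rewrite /= phi_x' gK.
Qed.

End KLinear.

Section DualBasis.
Variables (k : comPzRingType) (H : algType k) (lam : H -> k^o).

Definition dual_basis n (x y : 'I_n -> H) : Prop :=
  (forall a, a = \sum_(j < n) lam (a * x j) *: y j) /\
  (forall a, a = \sum_(j < n) lam (y j * a) *: x j).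

Definition casimir n (x y : 'I_n -> H) : seq (H * H) :=
  [seq (x j, y j) | j <- index_enum 'I_n].

(* The coordinates come from the projective basis of H, transported to H by
   the Frobenius isomorphism H -> Hom(H, k); the second expansion holds since
   both sides have the same image under that isomorphism. *)
Lemma frobenius_dual_basis :
  fg_projective H -> frobenius_hom lam ->
  exists n (x y : 'I_n -> H), dual_basis x y.
Proof.
move=> [n [f [g [lin_f lin_g fK]]]] [lin_lam frob].
have /fin_all_exists [x lam_x] j : exists xj, forall a, lam (a * xj) = f a 0 j.
  have lin_fj : klinear (fun a => f a 0 j : k^o) by move=> c a b; rewrite lin_f !mxE.
  by have [xj [fj _]] := frob _ lin_fj; exists xj => a; rewrite fj.
pose y j := g (delta_mx 0 j).
have expand_y a : a = \sum_(j < n) lam (a * x j) *: y j.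
  rewrite -{1}(fK a) {1}(row_sum_delta (f a)) (klinear_sum lin_g).
  by apply: eq_bigr => j _; rewrite (klinearZ lin_g) lam_x.
exists n, x, y; split=> // a.
have lin_lam_a : klinear (fun b => lam (b * a)).
  by move=> c b1 b2; rewrite mulrDl -scalerAl lin_lam.
have [a' [_ uniq_a]] := frob _ lin_lam_a.
rewrite [LHS](uniq_a a (fun _ => erefl)); symmetry; apply: uniq_a => b.
rewrite mulr_sumr (klinear_sum lin_lam) {1}(expand_y b) mulr_suml (klinear_sum lin_lam).
apply: eq_bigr => j _; rewrite -scalerAr -scalerAl !(klinearZ lin_lam).
exact: mulrC.
Qed.

Section Casimir.
Variables (n : nat) (x y : 'I_n -> H).
Hypothesis dual_xy : dual_basis x y.

Lemma casimir_central b :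
  teq [seq (b * u.1, u.2) | u <- casimir x y] [seq (u.1, u.2 * b) | u <- casimir x y].
Proof.
have [expand_y expand_x] := dual_xy.
move=> W F [lin_F1 lin_F2]; rewrite !big_map /=; symmetry.
transitivity (\sum_(j <- index_enum 'I_n) \sum_(i < n)
                lam (y j * (b * x i)) *: F (x j) (y i)).
  apply: eq_bigr => j _; rewrite {1}(expand_y (y j * b)) (klinear_sum (lin_F2 _)).
  by apply: eq_bigr => i _; rewrite (klinearZ (lin_F2 _)) mulrA.
rewrite exchange_big; apply: eq_bigr => i _ /=.
rewrite {2}(expand_x (b * x i)) (klinear_sum (lin_F1 _)); apply: eq_bigr => j _.
by rewrite (klinearZ (lin_F1 _)).
Qed.

Lemma dual_basis_represent (f : H -> k^o) :
  klinear lam -> klinear f -> forall a, lam ((\sum_(j < n) f (x j) *: y j) * a) = f a.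
Proof.
move=> lin_lam lin_f a; have [_ expand_x] := dual_xy.
rewrite {2}(expand_x a) mulr_suml !(klinear_sum _) //.
apply: eq_bigr => j _; rewrite -scalerAl (klinearZ lin_lam) (klinearZ lin_f).
exact: mulrC.
Qed.

End Casimir.
End DualBasis.

Section Hopf.
Variables (k : comPzRingType) (H : algType k)
  (Delta : H -> seq (H * H)) (eps : H -> k^o) (S : H -> H).
Hypothesis hopf : is_hopf_algebra Delta eps S.

Lemma comult_mul_sum (W : lmodType k) (F : H -> H -> W) :
  kbilinear F -> forall a b,
  \sum_(v <- Delta (a * b)) F v.1 v.2 =
  \sum_(w <- Delta a) \sum_(z <- Delta b) F (w.1 * z.1) (w.2 * z.2).
Proof.
have [_ Delta_mul _ _ _] := hopf.
by move=> bil_F a b; rewrite (Delta_mul a b _ _ bil_F) big_allpairs_dep.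
Qed.

(* Coassociativity followed by S(x_(1)) x_(2) = eps(x) 1 and the counit law. *)
Lemma antipode_coassoc_sum (W : lmodType k) (F : H -> H -> W) :
  kbilinear F -> forall x,
  \sum_(u <- Delta x) \sum_(w <- Delta u.2) F (S u.1 * w.1) w.2 = F 1 x.
Proof.
have [_ _ _ coassoc [_ counit_l _ [lin_S antipode_l _]]] := hopf.
move=> [lin_F1 lin_F2] x.
have tri : ktrilinear (fun a1 a2 a3 : H => F (S a1 * a2) a3).
  split=> [a2 a3 c b1 b2 | a1 a3 c b1 b2 | a1 a2]; last exact: lin_F2.
    by rewrite lin_S mulrDl -scalerAl lin_F1.
  by rewrite mulrDr -scalerAr lin_F1.
have := coassoc x _ _ tri; rewrite !big_flatten /= !big_map.
under [in LHS]eq_bigr do rewrite big_map.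
under [in RHS]eq_bigr do rewrite big_map.
move=> /= <-.
transitivity (\sum_(u <- Delta x) eps u.1 *: F 1 u.2).
  apply: eq_bigr => u _; rewrite -(klinear_sum (lin_F1 _)) antipode_l.
  exact: (klinearZ (lin_F1 _)).
rewrite -{2}[x]counit_l (klinear_sum (lin_F2 _)).
by apply: eq_bigr => u _; rewrite (klinearZ (lin_F2 _)).
Qed.

Section LeftIntegral.
Variables (lam : H -> k^o) (s : H).
Hypotheses (lin_lam : klinear lam)
  (lam_integral : forall a, \sum_(u <- Delta a) lam u.2 *: u.1 = lam a *: 1)
  (lam_s : forall a, lam (s * a) = eps a).

(* Write lam(s_(2) b) 1 with the integral property, split Delta(s_(2) b)
   multiplicatively and collapse S(s_(1)) s_(2) by antipode_coassoc_sum; what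
   remains is sum lam(s b_(2)) b_(1) = sum eps(b_(2)) b_(1) = b. *)
Lemma integral_antipode_inverse b :
  \sum_(u <- Delta s) lam (u.2 * b) *: S u.1 = b.
Proof.
have [_ _ _ _ [_ _ counit_r _]] := hopf.
pose F (c a : H) := \sum_(z <- Delta b) lam (a * z.2) *: (c * z.1).
have bil_F : kbilinear F.
  split=> [a c c1 c2 | c a a1 a2]; rewrite /F scaler_sumr -big_split /=;
    apply: eq_bigr => z _.
    by rewrite mulrDl scalerDr -scalerAl !scalerA mulrC.
  by rewrite mulrDl -scalerAl lin_lam scalerDl scalerA.
have bil_int (d : H) : kbilinear (fun a c : H => lam c *: (d * a)).
  split=> [c r a1 a2 | a r c1 c2]; last by rewrite lin_lam scalerDl scalerA.
  by rewrite mulrDr scalerDr -scalerAr !scalerA mulrC.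
transitivity (\sum_(u <- Delta s) \sum_(w <- Delta u.2) F (S u.1 * w.1) w.2).
  apply: eq_bigr => u _.
  have -> : lam (u.2 * b) *: S u.1 = S u.1 * (lam (u.2 * b) *: 1).
    by rewrite -scalerAr mulr1.
  rewrite -lam_integral mulr_sumr.
  under eq_bigr do rewrite -scalerAr.
  rewrite (comult_mul_sum (bil_int (S u.1))); apply: eq_bigr => w _.
  by apply: eq_bigr => z _; rewrite mulrA.
rewrite (antipode_coassoc_sum bil_F) /F -[RHS]counit_r.
by apply: eq_bigr => z _; rewrite mul1r lam_s.
Qed.

Lemma casimir_sum_one n (x y : 'I_n -> H) :
  dual_basis lam x y -> eps s = 1 -> \sum_(u <- casimir x y) u.1 * u.2 = 1.
Proof.
have [_ _ _ _ [_ _ _ [_ antipode_l _]]] := hopf.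
move=> [expand_y _] eps_s.
rewrite big_map -[RHS]scale1r -eps_s -antipode_l.
transitivity (\sum_(u <- Delta s) \sum_(j < n) lam (u.2 * x j) *: (S u.1 * y j)).
  rewrite exchange_big; apply: eq_bigr => j _ /=.
  rewrite -{1}(integral_antipode_inverse (x j)) mulr_suml.
  by apply: eq_bigr => u _; rewrite scalerAl.
apply: eq_bigr => u _; rewrite {2}(expand_y u.2) mulr_sumr.
by apply: eq_bigr => j _; rewrite scalerAr.
Qed.

End LeftIntegral.
End Hopf.

Lemma separable_counit_integral (k : comPzRingType) (H : algType k) (eps : H -> k^o) :
  klinear eps -> (forall x y, eps (x * y) = eps x * eps y) -> eps 1 = 1 ->
  separable_algebra H -> exists t, eps t = 1 /\ forall a, t * a = eps a *: t.
Proof.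
move=> lin_eps eps_mul eps1 [e [sum_e central_e]].
have bil : kbilinear (fun v w : H => eps v *: w).
  split=> [w a v1 v2 | v a w1 w2]; first by rewrite lin_eps scalerDl scalerA.
  by rewrite scalerDr !scalerA mulrC.
exists (\sum_(u <- e) eps u.1 *: u.2); split.
  rewrite -eps1 -sum_e !(klinear_sum lin_eps); apply: eq_bigr => u _.
  by rewrite (klinearZ lin_eps) eps_mul.
move=> a; have := central_e a _ _ bil; rewrite !big_map /= mulr_suml scaler_sumr.
move=> central_a; transitivity (\sum_(u <- e) eps u.1 *: (u.2 * a)).
  by apply: eq_bigr => u _; rewrite scalerAl.
by rewrite -central_a; apply: eq_bigr => u _; rewrite eps_mul scalerA.
Qed.

Lemma left_norm_at_integral (k : comPzRingType) (H : algType k) (P Q : lmodType k)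
    (ev : Q -> P -> k^o) (psi : H -> P) (eps : H -> k^o) (N : seq (H * Q)) (t : H) :
  kbilinear ev -> klinear psi -> left_norm ev psi eps N ->
  (forall a, t * a = eps a *: t) ->
  ev (\sum_(u <- N) eps u.1 *: u.2) (psi t) = eps t.
Proof.
move=> [lin_ev1 lin_ev2] lin_psi norm_N t_integral.
rewrite (klinear_sum (lin_ev1 _)) -norm_N; apply: eq_bigr => u _.
by rewrite (klinearZ (lin_ev1 _)) t_integral (klinearZ lin_psi) (klinearZ (lin_ev2 _)).
Qed.

Lemma morita_invertible_norm_separable (k : comPzRingType) (H : algType k)
    (Delta : H -> seq (H * H)) (eps : H -> k^o) (S : H -> H)
    (P Q : lmodType k) (ev : Q -> P -> k^o) (psi : H -> P) (N : seq (H * Q)) :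
  is_hopf_algebra Delta eps S -> fg_projective H -> invertible_module P ->
  is_dual ev -> frobenius_hom psi ->
  (forall a : H, teq [seq (u.1, psi u.2) | u <- Delta a] [:: (1, psi a)]) ->
  left_norm ev psi eps N ->
  morita_invertible ev (\sum_(u <- N) eps u.1 *: u.2) -> separable_algebra H.
Proof.
move=> hopf fg inv_P [[lin_ev1 lin_ev2] _] frob psi_cond norm_N [p qp].
have [_ _ _ _ [[lin_eps _ _] _ _ _]] := hopf.
set q := \sum_(u <- N) eps u.1 *: u.2 in qp.
pose lam := ev q \o psi.
have psiE : forall x, x = ev q x *: p := invertible_module_unimodular inv_P (lin_ev2 q) qp.
have frob_lam : frobenius_hom lam.
  apply: (frobenius_hom_comp (g' := fun c : k^o => c *: p) frob (lin_ev2 q) _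
           (fun x => esym (psiE x))).
    by move=> c a b; rewrite scalerDl scalerA.
  by move=> c; rewrite (klinearZ (lin_ev2 q)) qp /GRing.scale /= mulr1.
have [lin_lam _] := frob_lam.
have [n [x [y dual_xy]]] := frobenius_dual_basis fg frob_lam.
have lam_integral a : \sum_(u <- Delta a) lam u.2 *: u.1 = lam a *: 1.
  have bil : kbilinear (fun (h : H) (z : P) => ev q z *: h).
    split=> [z c h1 h2 | h c z1 z2]; last by rewrite lin_ev2 scalerDl scalerA.
    by rewrite scalerDr !scalerA mulrC.
  by have := psi_cond a _ _ bil; rewrite big_map big_seq1.
pose t := \sum_(u <- N) ev u.2 p *: u.1.
have lam_t a : lam (a * t) = eps a.
  rewrite -norm_N mulr_sumr (klinear_sum lin_lam); apply: eq_bigr => u _.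
  rewrite -scalerAr (klinearZ lin_lam) [in RHS](psiE (psi _)) (klinearZ (lin_ev2 _)).
  exact: mulrC.
have eps_t : eps t = 1.
  rewrite -qp (klinear_sum lin_eps) (klinear_sum (lin_ev1 _)); apply: eq_bigr => u _.
  by rewrite (klinearZ lin_eps) (klinearZ (lin_ev1 _)) [LHS]mulrC.
have lam_s := dual_basis_represent dual_xy lin_lam lin_eps.
have eps_s : eps (\sum_(j < n) eps (x j) *: y j) = 1 by rewrite -lam_t lam_s eps_t.
exists (casimir x y); split; last exact: (casimir_central dual_xy).
exact: (casimir_sum_one hopf lin_lam lam_integral lam_s dual_xy eps_s).
Qed.

Theorem theorem6p2 (k : comPzRingType) (H : algType k)
    (Delta : H -> seq (H * H)) (eps : H -> k^o) (S : H -> H)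
    (P Q : lmodType k) (ev : Q -> P -> k^o) (psi : H -> P) (N : seq (H * Q)) :
  is_hopf_algebra Delta eps S ->
  fg_projective H ->
  invertible_module P ->
  is_dual ev ->
  frobenius_hom psi ->
  (forall a : H, teq [seq (u.1, psi u.2) | u <- Delta a] [:: (1, psi a)]) ->
  left_norm ev psi eps N ->
  separable_algebra H <->
  morita_invertible ev (\sum_(u <- N) eps u.1 *: u.2).
Proof.
move=> hopf fg inv_P dual_ev frob psi_cond norm_N; split; last first.
  exact: morita_invertible_norm_separable hopf fg inv_P dual_ev frob psi_cond norm_N.
have [_ _ _ _ [[lin_eps eps_mul eps1] _ _ _]] := hopf.
move=> /(separable_counit_integral lin_eps eps_mul eps1) [t [eps_t t_integral]].
exists (psi t); rewrite -eps_t.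
exact: left_norm_at_integral dual_ev.1 frob.1 norm_N t_integral.
Qed.
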